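(* Let $n$ be any positive integer. There exists a 1-layer transformer, with a suitable position embedding, that performs function evaluation for domain $[n]$ in the ''consecutive positions, ordered keys'' presentation. That is, for every function $f:[n]\to[n]$ and every target key $i^*\in[n]$, on the input sequence $0,f(0),1,f(1),\dots,n-1,f(n-1),i^*$ of length $2n+1$ (position $2i$ holds $i$, position $2i+1$ holds $f(i)$, position $2n$ holds $i^*$), it outputs $f(i^* )$. The transformer uses leftmost hard attention, one attention head, embedding dimension $4$, $O(\log n)$ bits of precision, no residual connections, and no MLP layer.
   Context: Notation: $[n]=\{0,1,\dots,n-1\}$. Transformer model (encoder-only, no masking, no layer normalization). A transformer of embedding dimension $d$ consists of three parts. - An input embedding maps an input sequence $x_0,\dots,x_{L-1}$ to vectors $\mathbf{e}(x_i)=\mathbf{w}(x_i)+\mathbf{p}(i)\in\mathbb{R}^d$. Here $\mathbf{w}$ is the token embedding and $\mathbf{p}$ is the position embedding, which may be chosen freely. - A sequence of length-preserving layers follows. - An output map comes last. Given an unembedding matrix $\mathbf{U}\in\mathbb{R}^{n\times d}$, the output is the index $i\in[n]$ maximizing $(\mathbf{U}\mathbf{Y}[L-1])_i$, where $\mathbf{Y}$ is the final layer's output sequence. A single-head attention layer has matrices $\mathbf{W}^Q,\mathbf{W}^K\in\mathbb{R}^{d_{hid}\times d}$ and $\mathbf{W}^V\in\mathbb{R}^{d\times d}$. It computes the scores $s[i,j]=(\mathbf{W}^Q\mathbf{X}[i])\cdot(\mathbf{W}^K\mathbf{X}[j])/\sqrt{d_{hid}}$, and outputs $\mathbf{Y}[i]=\sum_j\alpha[i,j]\mathbf{W}^V\mathbf{X}[j]$.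 - In leftmost hard attention, $\alpha[i,j]=1$ for the smallest $j$ maximizing $s[i,j]$, and $\alpha[i,j]=0$ otherwise. - With residuals the output is $\mathbf{X}[i]+\sum_j\alpha[i,j]\mathbf{W}^V\mathbf{X}[j]$. An MLP layer applies a 2-layer ReLU network position-wise. A $k$-layer transformer has $k$ attention layers and any number of MLP layers. *)

From HB Require Import structures.
From mathcomp Require Import all_boot all_order all_algebra.
From mathcomp Require Import reals.
Set Implicit Arguments. Unset Strict Implicit. Unset Printing Implicit Defensive.
Import Order.TTheory GRing.Theory Num.Theory.
Local Open Scope ring_scope.

Definition seqlen (n : nat) : nat := (2 * n).+1.

(* A 1-layer transformer: vocabulary and output classes are [n] = 'I_n,
   embedding dimension d, one single-head attention layer with hidden
   dimension dh, NO residual connection and NO MLP layer. *)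
Record tf1 (R : nzRingType) (n d dh : nat) := TF1 {
  tok : 'I_n -> 'cV[R]_d;
  pos : 'I_(seqlen n) -> 'cV[R]_d;
  WQ  : 'M[R]_(dh, d);
  WK  : 'M[R]_(dh, d);
  WV  : 'M[R]_d;
  UU  : 'M[R]_(n, d)
}.

Section Run.
Variables (R : rcfType) (n d dh : nat) (T : tf1 R n d dh).

Definition emb (x : nat -> 'I_n) (p : 'I_(seqlen n)) : 'cV[R]_d :=
  tok T (x (nat_of_ord p)) + pos T p.

Definition qvec x p : 'cV[R]_dh := WQ T *m emb x p.
Definition kvec x p : 'cV[R]_dh := WK T *m emb x p.

Definition rawscore x p q : R := \sum_(k < dh) qvec x p k 0 * kvec x q k 0.

Definition score x p q : R := rawscore x p q / Num.sqrt (dh%:R).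

Definition leftmost_argmax m (s : 'I_m -> R) (j : 'I_m) : Prop :=
  (forall k, s k <= s j) /\ (forall k : 'I_m, (k < j)%N -> s k < s j).

Definition vvec x j : 'cV[R]_d := WV T *m emb x j.
Definition logits x j : 'cV[R]_n := UU T *m vvec x j.

(* Leftmost hard attention at the last position L-1 attends to the leftmost
   maximizer j of s[L-1, .]; Y[L-1] = W^V X[j]; the output is the index
   maximizing (U Y[L-1]).  [outputs x y] says the output is (uniquely) y. *)
Definition outputs (x : nat -> 'I_n) (y : 'I_n) : Prop :=
  forall j, leftmost_argmax (score x ord_max) j ->
    forall k : 'I_n, k != y -> logits x j k 0 < logits x j y 0.

End Run.

(* O(log n)-bit precision: a value is representable with precision parameter C
   if it is a ratio a/b of integers with |a|, |b| <= (n+1)^C  (i.e. it is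
   described by O(C log n) bits). *)
Definition repr_prec (R : numFieldType) (C n : nat) (v : R) : Prop :=
  exists a b : int, b != 0 /\ (`|a| <= (n.+1 ^ C)%:Z)%R /\
    (`|b| <= (n.+1 ^ C)%:Z)%R /\ v = a%:~R / b%:~R.

Definition params_prec (R : rcfType) (C n d dh : nat) (T : tf1 R n d dh) : Prop :=
  (forall a i, repr_prec C n (tok T a i 0)) /\
  (forall p i, repr_prec C n (pos T p i 0)) /\
  (forall i j, repr_prec C n (WQ T i j)) /\
  (forall i j, repr_prec C n (WK T i j)) /\
  (forall i j, repr_prec C n (WV T i j)) /\
  (forall i j, repr_prec C n (UU T i j)).

Definition run_prec (R : rcfType) (C n d dh : nat) (T : tf1 R n d dh)
    (x : nat -> 'I_n) : Prop :=
  (forall p i, repr_prec C n (emb T x p i 0)) /\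
  (forall p k, repr_prec C n (qvec T x p k 0)) /\
  (forall p k, repr_prec C n (kvec T x p k 0)) /\
  (forall p q, repr_prec C n (rawscore T x p q)) /\
  (forall p i, repr_prec C n (vvec T x p i 0)) /\
  (forall p k, repr_prec C n (logits T x p k 0)).

From mathcomp Require Import all_boot all_order all_algebra.
From mathcomp Require Import reals.
From mathcomp Require Import zify ring.
Set Implicit Arguments. Unset Strict Implicit. Unset Printing Implicit Defensive.
Import Order.TTheory GRing.Theory Num.Theory.
Local Open Scope ring_scope.

(* Position 2i+1 carries the key i both as i and as -i^2, and every position
   carries a constant 1.  The query at the last position, holding the target
   key t, then scores position 2i+1 by 2ti - i^2 = t^2 - (i - t)^2, uniquely
   maximal at i = t, while the even positions score -1 < 0.  Attention
   therefore copies f(t) (with the constant 1) to the output, and row k of the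
   unembedding scores it by 2 k f(t) - k^2, uniquely maximal at k = f(t).
   The key tokens at the even positions are never read: since the keys are
   ordered, the position embedding supplies them.  All parameters and
   intermediate values are integers of size O(n^2), i.e. of O(log n) bits. *)

Lemma ltr_quadratic_peak (R : realDomainType) (a b : R) :
  b != a -> 2 * a * b - b ^+ 2 < 2 * a * a - a ^+ 2.
Proof.
move=> ba; rewrite -subr_gt0 (_ : _ - _ = (a - b) ^+ 2); last by ring.
by rewrite exprn_even_gt0 //= subr_eq0 eq_sym.
Qed.

Definition key_at (p : nat) : int := if odd p then (p./2)%:Z else 0.

(* The even positions get -1 rather than 0 so that they lose even against
   the target key 0, whose score is 0. *)
Definition neg_sqkey_at (p : nat) : int := if odd p then - (p./2 ^ 2)%:Z else -1.

Lemma query_score_lt (a p : nat) : p != (2 * a).+1 ->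
  2 * a%:Z * key_at p + neg_sqkey_at p
    < 2 * a%:Z * key_at (2 * a).+1 + neg_sqkey_at (2 * a).+1.
Proof.
rewrite /key_at /neg_sqkey_at /= mul2n odd_double /= uphalf_double.
case: (boolP (odd p)) => [p_odd | _] p_ne; last by nia.
have key_ne : (p./2)%:Z != a%:Z.
  apply: contra p_ne => /eqP [<-]; apply/eqP.
  by have := odd_double_half p; rewrite p_odd; lia.
by have := ltr_quadratic_peak key_ne; lia.
Qed.

Lemma key_at_le (n : nat) (p : 'I_(seqlen n)) : `|key_at p| <= n%:Z.
Proof. by have := ltn_ord p; rewrite /key_at /seqlen; case: ifP; lia. Qed.

Lemma neg_sqkey_at_le (n : nat) (p : 'I_(seqlen n)) : `|neg_sqkey_at p| <= (n.+1 ^ 2)%:Z.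
Proof. by have := ltn_ord p; rewrite /neg_sqkey_at /seqlen; case: ifP; nia. Qed.

Definition int_mx {R : nzRingType} {m k : nat} (rows : seq (seq int)) : 'M[R]_(m, k) :=
  \matrix_(i, j) ((nth [::] rows i)`_j)%:~R.

Section Precision.
Variables (R : numFieldType) (C n : nat).
Let small (z : int) := `|z| <= (n.+1 ^ C)%:Z.

Lemma repr_prec_int (z : int) : small z -> repr_prec C n (z%:~R : R).
Proof.
move=> z_small; exists z, 1; do !split => //.
  by rewrite normr1 lez_nat expn_gt0.
by rewrite divr1.
Qed.

Lemma repr_prec_nth (s : seq int) (i : nat) :
  all small s -> repr_prec C n ((s`_i)%:~R : R).
Proof.
move=> /allP s_small; apply: repr_prec_int.
have [/(mem_nth 0)/s_small // | /(nth_default 0) ->] := ltnP i (size s).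
by rewrite /small normr0.
Qed.

Lemma repr_prec_int_mx m k (rows : seq (seq int)) :
  all (all small) rows -> forall i j, repr_prec C n (@int_mx R m k rows i j).
Proof.
move=> /allP rows_small i j; rewrite mxE; apply: repr_prec_nth.
by have [/(mem_nth [::])/rows_small | /(nth_default [::]) ->] := ltnP i (size rows).
Qed.

End Precision.

Section Construction.
Variables (R : rcfType) (n : nat).

Definition fe_tok (a : 'I_n) : 'cV[R]_4 := \col_i ([:: a%:Z; 0; 0; 0]`_i)%:~R.

Definition fe_pos (p : 'I_(seqlen n)) : 'cV[R]_4 :=
  \col_i ([:: 0; key_at p; neg_sqkey_at p; 1]`_i)%:~R.

Definition fe_query : 'M[R]_(2, 4) :=
  int_mx [:: [:: 1; 0; 0; 0]; [:: 0; 0; 0; 1]].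

Definition fe_key : 'M[R]_(2, 4) :=
  int_mx [:: [:: 0; 2; 0; 0]; [:: 0; 0; 1; 0]].

Definition fe_value : 'M[R]_4 :=
  int_mx [:: [:: 1; 0; 0; 0]; [:: 0; 0; 0; 1]; [:: 0; 0; 0; 0]; [:: 0; 0; 0; 0]].

Definition fe_unemb : 'M[R]_(n, 4) :=
  \matrix_(k, j) ([:: 2 * k%:Z; - (k ^ 2)%:Z; 0; 0]`_j)%:~R.

Definition fe_transformer : tf1 R n 4 2 :=
  TF1 fe_tok fe_pos fe_query fe_key fe_value fe_unemb.

Variable x : nat -> 'I_n.

Lemma fe_embE p (i : 'I_4) : emb fe_transformer x p i 0 =
  ([:: (x p)%:Z; key_at p; neg_sqkey_at p; 1]`_i)%:~R.
Proof. by rewrite /emb !mxE; case: i => [[|[|[|[|i]]]] ?] //=; ring. Qed.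

Lemma fe_qvecE p (k : 'I_2) :
  qvec fe_transformer x p k 0 = ([:: (x p)%:Z; 1]`_k)%:~R.
Proof.
rewrite /qvec mxE !big_ord_recl big_ord0 !fe_embE !mxE.
by case: k => [[|[|k]] ?] //=; ring.
Qed.

Lemma fe_kvecE p (k : 'I_2) :
  kvec fe_transformer x p k 0 = ([:: 2 * key_at p; neg_sqkey_at p]`_k)%:~R.
Proof.
rewrite /kvec mxE !big_ord_recl big_ord0 !fe_embE !mxE.
by case: k => [[|[|k]] ?] //=; ring.
Qed.

Lemma fe_rawscoreE p q : rawscore fe_transformer x p q =
  (2 * (x p)%:Z * key_at q + neg_sqkey_at q)%:~R.
Proof. by rewrite /rawscore !big_ord_recl big_ord0 !fe_qvecE !fe_kvecE /=; ring. Qed.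

Lemma fe_vvecE p (i : 'I_4) :
  vvec fe_transformer x p i 0 = ([:: (x p)%:Z; 1; 0; 0]`_i)%:~R.
Proof.
rewrite /vvec mxE !big_ord_recl big_ord0 !fe_embE !mxE.
by case: i => [[|[|[|[|i]]]] ?] //=; ring.
Qed.

Lemma fe_logitsE p (k : 'I_n) :
  logits fe_transformer x p k 0 = (2 * k%:Z * (x p)%:Z - (k ^ 2)%:Z)%:~R.
Proof. by rewrite /logits mxE !big_ord_recl big_ord0 !fe_vvecE !mxE /=; ring. Qed.

Lemma fe_run_prec : run_prec 3 fe_transformer x.
Proof.
do ![split].
- move=> p i; rewrite fe_embE; apply: repr_prec_nth.
  by have := ltn_ord (x p); have := key_at_le p; have := neg_sqkey_at_le p; rewrite /=; nia.
- move=> p k; rewrite fe_qvecE; apply: repr_prec_nth.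
  by have := ltn_ord (x p); rewrite /=; nia.
- move=> p k; rewrite fe_kvecE; apply: repr_prec_nth.
  by have := key_at_le p; have := neg_sqkey_at_le p; rewrite /=; nia.
- move=> p q; rewrite fe_rawscoreE; apply: repr_prec_int.
  by have := ltn_ord (x p); have := key_at_le q; have := neg_sqkey_at_le q; rewrite /=; nia.
- move=> p i; rewrite fe_vvecE; apply: repr_prec_nth.
  by have := ltn_ord (x p); rewrite /=; nia.
- move=> p k; rewrite fe_logitsE; apply: repr_prec_int.
  by have := ltn_ord (x p); have := ltn_ord k; rewrite /=; nia.
Qed.

Lemma fe_attends_value (t : 'I_n) (j : 'I_(seqlen n)) : x (2 * n)%N = t ->
  (forall q, score fe_transformer x ord_max q <= score fe_transformer x ord_max j) ->
  j = (2 * t).+1 :> nat.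
Proof.
move=> x_query j_max; have t_lt : ((2 * t).+1 < seqlen n)%N.
  by have := ltn_ord t; rewrite /seqlen; lia.
apply/eqP; apply: contraT => j_ne; have := j_max (Ordinal t_lt).
rewrite ler_pM2r ?invr_gt0 ?sqrtr_gt0 ?ltr0n // !fe_rawscoreE ler_int /= x_query.
by rewrite leNgt query_score_lt.
Qed.

End Construction.

Lemma fe_params_prec (R : rcfType) (n : nat) : (0 < n)%N ->
  params_prec 3 (fe_transformer R n).
Proof.
move=> n_gt0; have two_small : 2 <= (n.+1 ^ 3)%:Z by rewrite lez_nat; nia.
do ![split]; try by apply: repr_prec_int_mx; rewrite /= ?two_small.
- move=> a i; rewrite mxE; apply: repr_prec_nth.
  by have := ltn_ord a; rewrite /=; nia.
- move=> p i; rewrite mxE; apply: repr_prec_nth.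
  by have := key_at_le p; have := neg_sqkey_at_le p; rewrite /=; nia.
- move=> k j; rewrite mxE; apply: repr_prec_nth.
  by have := ltn_ord k; rewrite /=; nia.
Qed.

Theorem theorem3 :
  exists C : nat, forall (R : realType) (n : nat), (0 < n)%N ->
  exists (dh : nat) (T : tf1 R n 4 dh),
    params_prec C T /\
    forall (f : 'I_n -> 'I_n) (istar : 'I_n) (x : nat -> 'I_n),
      (forall i : 'I_n, x (2 * i)%N = i) ->
      (forall i : 'I_n, x (2 * i).+1 = f i) ->
      x (2 * n)%N = istar ->
      run_prec C T x /\ outputs T x (f istar).
Proof.
exists 3%N => R n n_gt0; exists 2%N, (fe_transformer R n).
split; first exact: fe_params_prec.
move=> f istar x _ x_val x_query; split; first exact: fe_run_prec.
move=> j [/(fe_attends_value x_query) j_val _] k k_ne.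
rewrite !fe_logitsE ltr_int j_val x_val.
have /ltr_quadratic_peak : k%:Z != (f istar)%:Z by [].
lia.
Qed.
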